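(* For every integer $n\geq 3$, there is a partition of $\mathbb{R}^n$ into $2^{\aleph_0}$ pairwise disjoint subsets, each of which is arcwise connected and dense in $\mathbb{R}^n$.
   Context: $\mathbb{R}^n$ carries its usual Euclidean topology. *)

From mathcomp Require Import all_boot.
From Stdlib Require Import Reals.
Open Scope R_scope.

Definition Rn (n : nat) : Type := 'I_n -> R.

Definition edist {n : nat} (x y : Rn n) : R :=
  sqrt (\big[Rplus/R0]_(i < n) (Rmult (Rminus (x i) (y i)) (Rminus (x i) (y i)))).

Definition pt_eq {n : nat} (x y : Rn n) : Prop := forall i : 'I_n, x i = y i.

Definition continuous_on_01 {n : nat} (f : R -> Rn n) : Prop :=
  forall t : R, (0 <= t <= 1)%R ->
  forall eps : R, (0 < eps)%R ->
  exists delta : R, (0 < delta)%R /\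
    forall s : R, (0 <= s <= 1)%R -> (Rabs (s - t) < delta)%R ->
      (edist (f s) (f t) < eps)%R.

(* An arc in A from x to y: a continuous injective map [0,1] -> R^n
   (a homeomorphism onto its image, since [0,1] is compact), with f 0 = x,
   f 1 = y, and image contained in A. *)
Definition is_arc_in {n : nat} (A : Rn n -> Prop) (x y : Rn n) (f : R -> Rn n) : Prop :=
  continuous_on_01 f /\
  (forall s t : R, (0 <= s <= 1)%R -> (0 <= t <= 1)%R -> pt_eq (f s) (f t) -> s = t) /\
  pt_eq (f 0%R) x /\ pt_eq (f 1%R) y /\
  (forall t : R, (0 <= t <= 1)%R -> A (f t)).

Definition arcwise_connected {n : nat} (A : Rn n -> Prop) : Prop :=
  (exists x, A x) /\
  forall x y : Rn n, A x -> A y -> ~ pt_eq x y ->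
    exists f : R -> Rn n, is_arc_in A x y f.

Definition dense {n : nat} (A : Rn n -> Prop) : Prop :=
  forall (x : Rn n) (eps : R), (0 < eps)%R -> exists y, A y /\ (edist x y < eps)%R.

From mathcomp Require Import all_boot.
From Stdlib Require Import Reals Lra Lia ZArith ClassicalEpsilon FunctionalExtensionality.
Open Scope R_scope.

(* Write points of R^n as (x0, u, v, w) with w in R^(n-3), and let
   f(u, v) = H(v) sin (H(v) u), where H(v) = 2^m for v = (2k+1)/2^m and H(v) = 1
   for non-dyadic v.  The pieces are the graphs x0 = a + f(u, v), a in R, which
   clearly partition R^n.  Each piece is dense: dyadic v of huge scale H are
   everywhere, and over such a v the map u |-> f(u, v) sweeps [-H, H] within
   distance O(1/H) of any u.  Each piece is arcwise connected: f is Lipschitz in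
   u along every level v = const and vanishes on the axis u = 0, so lifting
   straight segments of (u, v, w) that stay in a level or on the axis gives arcs,
   and at most three of them join any two points. *)

Lemma Rabs_sin_le x : Rabs (sin x) <= Rabs x.
Proof.
have [Hx1 | Hx1] := Rle_lt_dec 1 (Rabs x).
  by apply: Rle_trans Hx1; apply: Rabs_le; have := SIN_bound x; lra.
have [Hlo Hhi] := Rabs_def2 _ _ Hx1.
have HPI := PI2_3_2.
have [Hneg | [-> | Hpos]] := Rtotal_order x 0.
- have Hlt := sin_lt_x (- x) ltac:(lra); rewrite sin_neg in Hlt.
  have Hs : sin x < 0 by apply: sin_lt_0_var; lra.
  rewrite (Rabs_left x Hneg) (Rabs_left _ Hs); lra.
- by rewrite sin_0 Rabs_R0; lra.
- have Hlt := sin_lt_x x Hpos.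
  have Hs : 0 < sin x by apply: sin_gt_0; lra.
  rewrite (Rabs_right (sin x)) ?(Rabs_right x); lra.
Qed.

(* [sin p - sin q = 2 sin ((p - q)/2) cos ((p + q)/2)] *)
Lemma Rabs_sin_sub_le p q : Rabs (sin p - sin q) <= Rabs (p - q).
Proof.
rewrite form4 !Rabs_mult (Rabs_right 2); last lra.
have Hsin := Rabs_sin_le ((p - q) / 2).
have Hcos : Rabs (cos ((p + q) / 2)) <= 1.
  by apply: Rabs_le; have := COS_bound ((p + q) / 2); lra.
have Hhalf : Rabs ((p - q) / 2) = Rabs (p - q) / 2.
  by rewrite Rabs_mult Rabs_inv (Rabs_right 2); last lra.
rewrite Hhalf in Hsin.
have := Rabs_pos (cos ((p + q) / 2)); have := Rabs_pos (sin ((p - q) / 2)).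
nra.
Qed.

Lemma big_Rplus_le_scale n (a c : 'I_n -> R) (k : R) :
  (forall i, a i <= k * c i) ->
  \big[Rplus/0]_(i < n) a i <= k * \big[Rplus/0]_(i < n) c i.
Proof.
move=> Hac; apply: (big_ind2 (fun x y => x <= k * y)) => //; first lra.
by move=> x1 x2 y1 y2; lra.
Qed.

Lemma big_Rplus_ones n : \big[Rplus/0]_(i < n) 1 = INR n.
Proof.
rewrite big_const_ord; elim: n => [//| n IHn].
by rewrite S_INR -IHn /=; lra.
Qed.

Lemma big_Rplus_sqr_le n (a : 'I_n -> R) : (forall i, 0 <= a i) ->
  \big[Rplus/0]_(i < n) (a i * a i)
    <= \big[Rplus/0]_(i < n) a i * \big[Rplus/0]_(i < n) a i.
Proof.
move=> Ha.
suff [] : 0 <= \big[Rplus/0]_(i < n) a i /\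
  \big[Rplus/0]_(i < n) (a i * a i)
    <= \big[Rplus/0]_(i < n) a i * \big[Rplus/0]_(i < n) a i by [].
apply: (big_ind2 (fun s q => 0 <= q /\ s <= q * q)); first lra.
  by move=> s1 s2 q1 q2; nra.
by move=> i _; have := Ha i; nra.
Qed.

Lemma edist_le_sum_abs n (x y : Rn n) :
  edist x y <= \big[Rplus/0]_(i < n) Rabs (x i - y i).
Proof.
have Hsum : 0 <= \big[Rplus/0]_(i < n) Rabs (x i - y i).
  by apply: (big_ind (fun s => 0 <= s)) => [|s1 s2|i _]; [lra | lra | exact: Rabs_pos].
rewrite /edist -(sqrt_square _ Hsum); apply: sqrt_le_1_alt.
rewrite (eq_bigr (fun i => Rabs (x i - y i) * Rabs (x i - y i))); last first.
  by move=> i _; rewrite -Rabs_mult Rabs_right //; apply: Rle_ge; apply: Rle_0_sqr.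
by apply: big_Rplus_sqr_le => i; exact: Rabs_pos.
Qed.

Lemma continuous_on_01_of_lipschitz n (g : R -> Rn n) (K : 'I_n -> R) :
  (forall s t i, Rabs (g s i - g t i) <= K i * Rabs (s - t)) ->
  continuous_on_01 g.
Proof.
move=> HK t _ eps Heps.
set C := Rabs (\big[Rplus/0]_(i < n) K i).
have HC : 0 <= C by exact: Rabs_pos.
exists (eps / (C + 1)); split; first by apply: Rdiv_lt_0_compat; lra.
move=> s _ Hst.
have Hst' : Rabs (s - t) * (C + 1) < eps.
  have := Rmult_lt_compat_r (C + 1) _ _ ltac:(lra) Hst.
  by rewrite /Rdiv Rmult_assoc Rinv_l; lra.
apply: (Rle_lt_trans _ _ _ (edist_le_sum_abs _ _ _)).
apply: (Rle_lt_trans _ _ _ (big_Rplus_le_scale _ _ K (Rabs (s - t)) _)).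
  by move=> i; rewrite Rmult_comm; exact: HK.
have := Rle_abs (\big[Rplus/0]_(i < n) K i); have := Rabs_pos (s - t); rewrite -/C.
nra.
Qed.

Lemma pt_eq_eq {n} (x y : Rn n) : pt_eq x y -> x = y.
Proof. exact: functional_extensionality. Qed.

Definition concat {n} (g1 g2 : R -> Rn n) (t : R) : Rn n :=
  if Rle_dec t (1/2) then g1 (2 * t) else g2 (2 * t - 1).

Lemma continuous_on_01_concat {n} (g1 g2 : R -> Rn n) :
  continuous_on_01 g1 -> continuous_on_01 g2 -> g1 1 = g2 0 ->
  continuous_on_01 (concat g1 g2).
Proof.
move=> c1 c2 E t Ht eps Heps; rewrite /concat.
have [Hlt | [-> | Hgt]] := Rtotal_order t (1/2).
- have [d [Hd Hd']] := c1 (2 * t) ltac:(lra) eps Heps.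
  exists (Rmin (d / 2) (1/2 - t)); split; first by apply: Rmin_pos; lra.
  move=> s Hs /Rabs_def2 [Hst1 Hst2].
  have := Rmin_l (d / 2) (1/2 - t); have := Rmin_r (d / 2) (1/2 - t) => Hm1 Hm2.
  case: (Rle_dec s (1/2)) => Hs2; last lra.
  case: (Rle_dec t (1/2)) => Ht2; last lra.
  by apply: Hd'; [lra | apply: Rabs_def1; lra].
- have [d1 [Hd1 Hd1']] := c1 1 ltac:(lra) eps Heps.
  have [d2 [Hd2 Hd2']] := c2 0 ltac:(lra) eps Heps.
  exists (Rmin d1 d2 / 2); split; first by have := Rmin_pos _ _ Hd1 Hd2; lra.
  move=> s Hs /Rabs_def2 [Hst1 Hst2].
  have := Rmin_l d1 d2; have := Rmin_r d1 d2 => Hm1 Hm2.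
  case: (Rle_dec (1/2) (1/2)) => [? | ?]; last lra.
  have -> : 2 * (1/2) = 1 by lra.
  case: (Rle_dec s (1/2)) => Hs2; last rewrite E.
    by apply: Hd1'; [lra | apply: Rabs_def1; lra].
  by apply: Hd2'; [lra | apply: Rabs_def1; lra].
- have [d [Hd Hd']] := c2 (2 * t - 1) ltac:(lra) eps Heps.
  exists (Rmin (d / 2) (t - 1/2)); split; first by apply: Rmin_pos; lra.
  move=> s Hs /Rabs_def2 [Hst1 Hst2].
  have := Rmin_l (d / 2) (t - 1/2); have := Rmin_r (d / 2) (t - 1/2) => Hm1 Hm2.
  case: (Rle_dec s (1/2)) => Hs2; first lra.
  case: (Rle_dec t (1/2)) => Ht2; first lra.
  by apply: Hd'; [lra | apply: Rabs_def1; lra].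
Qed.

Lemma concat_arc {n} (A : Rn n -> Prop) x y z (g1 g2 : R -> Rn n) :
  is_arc_in A x y g1 -> is_arc_in A y z g2 ->
  (forall s t, 0 <= s <= 1 -> 0 <= t <= 1 -> pt_eq (g1 s) (g2 t) -> s = 1) ->
  is_arc_in A x z (concat g1 g2).
Proof.
move=> [c1 [inj1 [g1x [g1y A1]]]] [c2 [inj2 [g2y [g2z A2]]]] Hmeet.
have E : g1 1 = g2 0 by apply: pt_eq_eq => i; rewrite g1y g2y.
have Hjoin s t : 0 <= s <= 1/2 -> 1/2 < t <= 1 -> ~ pt_eq (g1 (2 * s)) (g2 (2 * t - 1)).
  move=> Hs Ht Hst; have Hs1 := Hmeet (2 * s) (2 * t - 1) ltac:(lra) ltac:(lra) Hst.
  have : pt_eq (g2 0) (g2 (2 * t - 1)) by move=> i; rewrite -E -Hst Hs1.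
  by move/inj2 => /(_ ltac:(lra) ltac:(lra)) ?; lra.
rewrite /concat; split; [exact: continuous_on_01_concat | split; [| split; [| split]]].
- move=> s t Hs Ht.
  case: (Rle_dec s (1/2)) => Hs2; case: (Rle_dec t (1/2)) => Ht2 /=.
  + by move/inj1 => /(_ ltac:(lra) ltac:(lra)) ?; lra.
  + by move/Hjoin; lra.
  + by move=> Hst; exfalso; apply: (Hjoin t s) => [|| i]; [lra | lra | rewrite Hst].
  + by move/inj2 => /(_ ltac:(lra) ltac:(lra)) ?; lra.
- by case: (Rle_dec 0 (1/2)) => [? | ?]; [rewrite Rmult_0_r | lra].
- case: (Rle_dec 1 (1/2)) => [? | ?]; first lra.
  by have -> : 2 * 1 - 1 = 1 by lra.
- move=> t Ht; case: (Rle_dec t (1/2)) => Ht2; [apply: A1 | apply: A2]; lra.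
Qed.

Lemma is_arc_in_sub {n} (A B : Rn n -> Prop) x y f :
  (forall z, A z -> B z) -> is_arc_in A x y f -> is_arc_in B x y f.
Proof. by move=> AB [c [inj [fx [fy Af]]]]; do 4 (split => //); move=> t /Af /AB. Qed.

Lemma is_arc_in_restrict {n} (A B : Rn n -> Prop) x y f :
  is_arc_in A x y f -> (forall t, 0 <= t <= 1 -> B (f t)) ->
  is_arc_in (fun z => A z /\ B z) x y f.
Proof. by move=> [c [inj [fx [fy Af]]]] Bf; do 4 (split => //); move=> t Ht; split; auto. Qed.

Definition odd_integer (z : R) : Prop := exists k : Z, z = IZR (2 * k + 1).

(* For a dyadic [v = (2k+1) / 2^m] this is [m]; it is [0] for non-dyadic [v]. *)
Definition dyadic_order (v : R) : nat :=
  match excluded_middle_informative (exists m : nat, odd_integer (v * 2 ^ m)) with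
  | left Hm => proj1_sig (constructive_indefinite_description _ Hm)
  | right _ => 0%nat
  end.

Definition dyadic_scale (v : R) : R := 2 ^ dyadic_order v.

Definition osc (u v : R) : R := dyadic_scale v * sin (dyadic_scale v * u).

Lemma dyadic_scale_ge1 v : 1 <= dyadic_scale v.
Proof. by rewrite /dyadic_scale -(pow_O 2); apply: Rle_pow; [lra | lia]. Qed.

Lemma dyadic_order_max v m : odd_integer (v * 2 ^ m) -> (m <= dyadic_order v)%coq_nat.
Proof.
move=> Hm; rewrite /dyadic_order.
case: excluded_middle_informative => [Hex | Hnex]; last by case: Hnex; exists m.
case: constructive_indefinite_description => m' Hm' /=.
case: (Nat.le_gt_cases m m') => // Hlt; exfalso.
have [[k Hk] [k' Hk']] := conj Hm Hm'.
have [e [He _]] := Nat.le_exists_sub (S m') m ltac:(lia).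
(* an odd integer would equal [2^(e+1)] times another one *)
have E : v * 2 ^ m = v * 2 ^ m' * 2 * 2 ^ e by rewrite He pow_add /=; ring.
rewrite Hk Hk' pow_IZR -!mult_IZR in E.
move/eq_IZR: E; set w := (2 ^ Z.of_nat e)%Z; lia.
Qed.

Lemma exists_pow2_gt (B : R) : exists m : nat, B < 2 ^ m.
Proof.
have [N HN] := Pow_x_infinity 2 ltac:(rewrite Rabs_right; lra) (B + 1).
exists N; have := HN N (le_n _).
by rewrite Rabs_right => [?|]; [lra | apply/Rle_ge/pow_le; lra].
Qed.

Lemma dyadic_scale_large_near (x d B : R) : 0 < d ->
  exists v, Rabs (v - x) < d /\ B <= dyadic_scale v.
Proof.
move=> Hd.
have [m Hm] := exists_pow2_gt (Rmax B (/ d)).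
have := Rmax_l B (/ d); have := Rmax_r B (/ d) => HdM HBM.
have HM := pow_lt 2 m ltac:(lra).
set M := 2 ^ m in Hm HM *.
(* [(2k+1)/M] is an odd multiple of [1/M] within [1/M] of [x] *)
set k := (up (x * M / 2) - 1)%Z.
have [A1 A2] := archimed (x * M / 2).
have Hk : IZR (2 * k + 1) = 2 * IZR (up (x * M / 2)) - 1.
  by rewrite /k plus_IZR mult_IZR minus_IZR /=; ring.
exists (IZR (2 * k + 1) / M); split.
- have -> : IZR (2 * k + 1) / M - x = (IZR (2 * k + 1) - x * M) / M by field; lra.
  rewrite Rabs_mult Rabs_inv (Rabs_right M); last lra.
  apply: (Rmult_lt_reg_r M) => //.
  rewrite Rmult_assoc Rinv_l ?Rmult_1_r; last lra.
  have : Rabs (IZR (2 * k + 1) - x * M) <= 1 by apply: Rabs_le; rewrite Hk; lra.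
  have : 1 < d * M.
    have := Rmult_lt_compat_l d _ _ Hd (Rle_lt_trans _ _ _ HdM Hm).
    by rewrite Rinv_r; lra.
  lra.
- have Hodd : odd_integer (IZR (2 * k + 1) / M * 2 ^ m).
    by exists k; rewrite /M; field; apply: pow_nonzero; lra.
  apply: (Rle_trans _ M); first lra.
  exact: Rle_pow 2 _ _ ltac:(lra) (dyadic_order_max _ _ Hodd).
Qed.

Lemma sin_period_Z x (k : Z) : sin (x + 2 * IZR k * PI) = sin x.
Proof.
have [Hk | Hk] := Z_le_gt_dec 0 k.
  by rewrite -(Z2Nat.id k Hk) -INR_IZR_INZ sin_period.
have -> : k = (- Z.of_nat (Z.to_nat (- k)))%Z by lia.
rewrite opp_IZR -INR_IZR_INZ -(sin_period _ (Z.to_nat (- k))).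
by f_equal; ring.
Qed.

(* Within one period past [H x], [w |-> H sin w] runs from [H] down to [-H]. *)
Lemma scaled_sin_onto (H t x : R) : 1 <= H -> Rabs t <= H ->
  exists u, H * Rabs (u - x) <= 4 * PI /\ H * sin (H * u) = t.
Proof.
move=> H1 Ht; have := PI_RGT_0 => HPI.
have [A1 A2] := archimed (H * x / (2 * PI)).
set k := up (H * x / (2 * PI)) in A1 A2.
have [B1 B2] : H * x < 2 * PI * IZR k <= H * x + 2 * PI.
  have E : H * x = 2 * PI * (H * x / (2 * PI)) by field; lra.
  by split; nra.
set g := fun w => H * sin w - t.
have Hg : continuity g.
  apply: continuity_minus; last exact: continuity_const.
  by apply: continuity_mult; [exact: continuity_const | exact: continuity_sin].
set w1 := PI / 2 + 2 * IZR k * PI.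
set w2 := 3 * (PI / 2) + 2 * IZR k * PI.
have g1 : g w1 = H - t by rewrite /g /w1 sin_period_Z sin_PI2; ring.
have g2 : g w2 = - H - t by rewrite /g /w2 sin_period_Z sin_3PI2; ring.
have Htl : - H <= t by have := Rle_abs (- t); rewrite Rabs_Ropp; lra.
have Htr : t <= H by have := Rle_abs t; lra.
have [z [[Hz1 Hz2] Hz]] := IVT_cor g w1 w2 Hg ltac:(rewrite /w1 /w2; lra)
  ltac:(rewrite g1 g2; nra).
exists (z / H); have -> : H * (z / H) = z by field; lra.
split; last by rewrite /g in Hz; lra.
have -> : z / H - x = (z - H * x) / H by field; lra.
rewrite Rabs_mult Rabs_inv (Rabs_right H); last lra.
have -> : H * (Rabs (z - H * x) * / H) = Rabs (z - H * x) by field; lra.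
by apply: Rabs_le; rewrite /w1 /w2 in Hz1 Hz2; lra.
Qed.

Lemma osc_0_l v : osc 0 v = 0.
Proof. by rewrite /osc Rmult_0_r sin_0 Rmult_0_r. Qed.

Lemma osc_lipschitz u u' v :
  Rabs (osc u v - osc u' v) <= dyadic_scale v ^ 2 * Rabs (u - u').
Proof.
have HH := dyadic_scale_ge1 v; set H := dyadic_scale v in HH *.
have Hsin := Rabs_sin_sub_le (H * u) (H * u').
rewrite /osc -/H -Rmult_minus_distr_l Rabs_mult (Rabs_right H); last lra.
rewrite -Rmult_minus_distr_l Rabs_mult (Rabs_right H) in Hsin; last lra.
have := Rabs_pos (u - u'); nra.
Qed.

Lemma osc_dense x1 x2 t rho : 0 < rho ->
  exists u v, Rabs (u - x1) < rho /\ Rabs (v - x2) < rho /\ osc u v = t.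
Proof.
move=> Hrho; have := PI_RGT_0 => HPI.
set B := Rmax (Rabs t) (4 * PI / rho + 1).
have [v [Hv HB]] := dyadic_scale_large_near x2 rho B Hrho.
have := Rmax_l (Rabs t) (4 * PI / rho + 1); have := Rmax_r (Rabs t) (4 * PI / rho + 1).
rewrite -/B => HB2 HB1.
have [u [Hu Hut]] := scaled_sin_onto _ t x1 (dyadic_scale_ge1 v) ltac:(lra).
exists u, v; split; last by split.
have Hscale : 4 * PI < dyadic_scale v * rho.
  have : rho * (4 * PI / rho) = 4 * PI by field; lra.
  nra.
have := Rabs_pos (u - x1); have := dyadic_scale_ge1 v; nra.
Qed.

Section Pieces.

Variable m : nat.

Definition i0 : 'I_m.+3 := @Ordinal m.+3 0 isT.
Definition i1 : 'I_m.+3 := @Ordinal m.+3 1 isT.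
Definition i2 : 'I_m.+3 := @Ordinal m.+3 2 isT.

Definition piece (a : R) (x : Rn m.+3) : Prop := x i0 = a + osc (x i1) (x i2).

Definition lift (a : R) (z : Rn m.+3) : Rn m.+3 :=
  fun i => if i == i0 then a + osc (z i1) (z i2) else z i.

Definition seg (a : R) (X Y : Rn m.+3) (t : R) : Rn m.+3 :=
  lift a (fun i => X i + t * (Y i - X i)).

Definition to_axis (a : R) (X : Rn m.+3) : Rn m.+3 :=
  lift a (fun i => if i == i1 then 0 else X i).

Variable a : R.

Lemma piece_lift z : piece a (lift a z).
Proof. by []. Qed.

Lemma lift_ne z i : i != i0 -> lift a z i = z i.
Proof. by rewrite /lift => /negbTE ->. Qed.

Lemma seg_ne X Y t i : i != i0 -> seg a X Y t i = X i + t * (Y i - X i).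
Proof. exact: lift_ne. Qed.

Lemma piece_neq_coord X Y : piece a X -> piece a Y -> ~ pt_eq X Y ->
  exists2 i, i != i0 & X i <> Y i.
Proof.
move=> HX HY HXY; apply: NNPP => Hall; apply: HXY => i.
have Heq j : j != i0 -> X j = Y j by move=> Hj; apply: NNPP => ?; apply: Hall; exists j.
case: (eqVneq i i0) => [-> | /Heq //].
by rewrite HX HY !Heq.
Qed.

(* [osc] is Lipschitz in [u] for fixed [v] and vanishes at [u = 0]. *)
Lemma seg_lipschitz X Y : X i2 = Y i2 \/ (X i1 = 0 /\ Y i1 = 0) ->
  forall s t i, Rabs (seg a X Y s i - seg a X Y t i)
    <= (if i == i0 then dyadic_scale (X i2) ^ 2 * Rabs (Y i1 - X i1)
        else Rabs (Y i - X i)) * Rabs (s - t).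
Proof.
move=> Hflat s t i; case: (eqVneq i i0) => [-> | Hi]; last first.
  rewrite !seg_ne // -Rabs_mult; apply: Req_le; f_equal; ring.
rewrite /seg /lift eqxx; cbv beta.
have -> : forall p q : R, a + p - (a + q) = p - q by move=> p q; ring.
case: Hflat => [<- | [-> ->]].
  rewrite (Rminus_diag (X i2)) !Rmult_0_r !Rplus_0_r.
  apply: Rle_trans (osc_lipschitz _ _ _) _.
  rewrite Rmult_assoc -Rabs_mult; apply: Req_le; do 2 f_equal; ring.
rewrite (Rminus_diag 0) !Rmult_0_r !Rplus_0_r !osc_0_l Rminus_diag Rabs_R0.
by rewrite Rmult_0_r Rmult_0_l; lra.
Qed.

Lemma seg_arc X Y : piece a X -> piece a Y -> ~ pt_eq X Y ->
  X i2 = Y i2 \/ (X i1 = 0 /\ Y i1 = 0) ->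
  is_arc_in (piece a) X Y (seg a X Y).
Proof.
move=> HX HY HXY Hflat; split; [| split; [| split; [| split]]].
- by apply: continuous_on_01_of_lipschitz; exact: seg_lipschitz.
- move=> s t _ _ Hst; have [i Hi HXYi] := piece_neq_coord _ _ HX HY HXY.
  have := Hst i; rewrite !seg_ne // => Hsti.
  have : (s - t) * (Y i - X i) = 0 by lra.
  by case/Rmult_integral => Hzero; [lra | case: HXYi; lra].
- move=> i; case: (eqVneq i i0) => [-> | Hi]; last by rewrite seg_ne //; ring.
  by rewrite /seg /lift eqxx HX; cbv beta; rewrite !Rmult_0_l !Rplus_0_r.
- move=> i; case: (eqVneq i i0) => [-> | Hi]; last by rewrite seg_ne //; ring.
  by rewrite /seg /lift eqxx HY; cbv beta; rewrite !Rmult_1_l !Rplus_minus.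
- by move=> t _; exact: piece_lift.
Qed.

Lemma seg_on_axis X Y t : X i1 = 0 -> Y i1 = 0 -> seg a X Y t i1 = 0.
Proof. by move=> HX HY; rewrite seg_ne // HX HY; ring. Qed.

Lemma seg_level X Y t : X i2 = Y i2 -> seg a X Y t i2 = Y i2.
Proof. by move=> HXY; rewrite seg_ne // HXY; ring. Qed.

(* From a point on the axis [u = 0]: along the axis to the level [v = Y i2],
   then along that level. *)
Lemma axis_arc X Y : piece a X -> piece a Y -> X i1 = 0 -> X i2 <> Y i2 ->
  exists f, is_arc_in (fun z => piece a z /\ (z i1 = 0 \/ z i2 = Y i2)) X Y f.
Proof.
move=> HX HY HX1 HXY2.
have HneqX Z : Z i2 = Y i2 -> ~ pt_eq X Z by move=> HZ /(_ i2); rewrite HZ.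
have [HY1 | HY1] := Req_dec (Y i1) 0.
  exists (seg a X Y); apply: is_arc_in_restrict => [| t _]; last by left; exact: seg_on_axis.
  by apply: seg_arc; [| | exact: HneqX | right].
set B := to_axis a Y.
have [HB1 HB2] : B i1 = 0 /\ B i2 = Y i2 by [].
exists (concat (seg a X B) (seg a B Y)); apply: concat_arc.
- apply: is_arc_in_restrict => [| t _]; last by left; exact: seg_on_axis.
  by apply: seg_arc; [| | exact: HneqX | right].
- apply: is_arc_in_restrict => [| t _]; last by right; exact: seg_level.
  by apply: seg_arc; [| | move/(_ i1); rewrite HB1 => /esym | left].
- move=> s t _ _ Hst.
  have := Hst i1; rewrite !seg_ne // HX1 HB1 => Ht1.
  have [Ht | //] : t = 0 \/ Y i1 = 0 by apply: Rmult_integral; lra.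
  have := Hst i2; rewrite !seg_ne // HB2 Ht => Hs2.
  have [Hs | Hs] : s - 1 = 0 \/ Y i2 - X i2 = 0 by apply: Rmult_integral; lra.
  + lra.
  + by case: HXY2; lra.
Qed.

Lemma piece_arc X Y : piece a X -> piece a Y -> ~ pt_eq X Y ->
  exists f, is_arc_in (piece a) X Y f.
Proof.
move=> HX HY HXY.
have [HXY2 | HXY2] := Req_dec (X i2) (Y i2).
  by exists (seg a X Y); apply: seg_arc => //; left.
have [HX1 | HX1] := Req_dec (X i1) 0.
  have [f Hf] := axis_arc _ _ HX HY HX1 HXY2.
  by exists f; apply: is_arc_in_sub Hf => z [].
set A := to_axis a X.
have [HA1 HA2] : A i1 = 0 /\ A i2 = X i2 by [].
have [g Hg] := axis_arc A Y (piece_lift _) HY HA1 ltac:(by rewrite HA2).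
exists (concat (seg a X A) g); apply: concat_arc.
- by apply: seg_arc; [| | move/(_ i1); rewrite HA1 | left].
- by apply: is_arc_in_sub Hg => z [].
- move=> s t _ Ht Hst; have [_ [_ [_ [_ Hgt]]]] := Hg.
  have [_ [Hg1 | Hg2]] := Hgt t Ht.
  + have := Hst i1; rewrite seg_ne // HA1 Hg1 => Hs1.
    have [Hs | //] : s - 1 = 0 \/ X i1 = 0 by apply: Rmult_integral; lra.
    lra.
  + have := Hst i2; rewrite seg_ne // HA2 Hg2 => Hs2.
    by case: HXY2; lra.
Qed.

Lemma piece_dense : dense (piece a).
Proof.
move=> x eps Heps.
have HN := pos_INR m.+3; set N := INR m.+3 in HN.
set rho := eps / (N + 1).
have Hrho : 0 < rho by apply: Rdiv_lt_0_compat; lra.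
have [u [v [Hu [Hv Huv]]]] := osc_dense (x i1) (x i2) (x i0 - a) _ Hrho.
set y := lift a (fun i => if i == i1 then u else if i == i2 then v else x i).
exists y; split; first exact: piece_lift.
have Hcoord i : Rabs (x i - y i) <= rho * 1.
  rewrite Rmult_1_r -Rabs_Ropp Ropp_minus_distr.
  case: (eqVneq i i0) => [-> | Hi].
    rewrite /y /lift /= Huv.
    have -> : a + (x i0 - a) - x i0 = 0 by ring.
    by rewrite Rabs_R0; lra.
  rewrite /y lift_ne //; case: (eqVneq i i1) => [-> | Hi1] //; first lra.
  case: (eqVneq i i2) => [-> | Hi2] //; first lra.
  by rewrite Rminus_diag Rabs_R0; lra.
apply: (Rle_lt_trans _ _ _ (edist_le_sum_abs _ _ _)).
apply: (Rle_lt_trans _ _ _ (big_Rplus_le_scale _ _ (fun _ => 1) rho Hcoord)).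
have E : rho * (N + 1) = eps by rewrite /rho; field; lra.
rewrite big_Rplus_ones -/N; nra.
Qed.

End Pieces.

Theorem corollary1 :
  forall n : nat, (3 <= n)%nat ->
  exists P : R -> (Rn n -> Prop),
    (forall a b : R, a <> b -> forall x : Rn n, P a x -> P b x -> False) /\
    (forall x : Rn n, exists a : R, P a x) /\
    (forall a : R, arcwise_connected (P a) /\ dense (P a)).
Proof.
case=> [|[|[|m]]] // _.
exists (piece m); split; [| split].
- by move=> a b Hab x Ha Hb; apply: Hab; rewrite /piece in Ha Hb; lra.
- by move=> x; exists (x (i0 m) - osc (x (i1 m)) (x (i2 m))); rewrite /piece; ring.
- move=> a; split; last exact: piece_dense.
  split; first by exists (lift m a (fun _ => 0)); exact: piece_lift.
  by move=> x y Hx Hy; exact: piece_arc.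
Qed.
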